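(* Let $\beta$ be a basis set of monomials in $k[x_1,\dots,x_r]$ ($k$ algebraically closed), $R$ the coordinate ring of $U_\beta$, and $M$ the maximal ideal of $t_\beta$ in $R$. For arbitrary arrows $c^{\mathbf b}_{\mathbf j}, c^{\mathbf b_1}_{\mathbf j_1}, c^{\mathbf b_2}_{\mathbf j_2}$ for $\beta$: (a) if $c^{\mathbf b}_{\mathbf j}\equiv 0\pmod{M^2}$ then $c^{\mathbf b}_{\mathbf j}\sim0$; (b) if $c^{\mathbf b_1}_{\mathbf j_1}\equiv c^{\mathbf b_2}_{\mathbf j_2}\not\equiv0\pmod{M^2}$ then $c^{\mathbf b_1}_{\mathbf j_1}\sim c^{\mathbf b_2}_{\mathbf j_2}$.
   Context: Monomials are identified with exponent vectors. A basis set is a finite nonempty set $\beta$ of monomials closed under taking divisors; $I_\beta$ is the ideal generated by monomials not in $\beta$, $n=|\beta|$. $\mathbf H^n$ is the Hilbert scheme of $n$ points of $\mathbb A^r_k$, $t_\beta$ the point of $I_\beta$, $U_\beta\subseteq\mathbf H^n$ the open affine set of points $t$ with $\beta$ a $k$-basis of $k[\mathbf x]/I_t$, with coordinate ring $R$. For $\mathbf x^{\mathbf d}\notin\beta$, $\mathbf x^{\mathbf j}\in\beta$, $c^{\mathbf d}_{\mathbf j}\in R$ is defined by $\mathbf x^{\mathbf d}-\sum_{\mathbf j\in\beta}c^{\mathbf d}_{\mathbf j}(t)\mathbf x^{\mathbf j}\in I_t$ for $t\in U_\beta$; $M$ is generated by these functions. An arrow is a pair $(\mathbf d,\mathbf j)$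 with tail $\mathbf x^{\mathbf d}\notin\beta$ and head $\mathbf x^{\mathbf j}\in\beta$, identified with $c^{\mathbf d}_{\mathbf j}$. A translation step replaces $(\mathbf d,\mathbf j)$ by $(\mathbf d\pm e_i,\mathbf j\pm e_i)$ provided the result is again an arrow; $\sim$ is the equivalence relation generated by steps. $c\sim0$ means $c$ is translation-equivalent to an arrow $(\mathbf d',\mathbf j')$ with, for some $i$, $j'_i=0$, $d'_i\ge1$ and $\mathbf x^{\mathbf d'-e_i}\notin\beta$. *)

From mathcomp Require Import all_boot all_algebra finmap.
From mathcomp Require Import monalg.
From Stdlib Require Import Relations.
Set Implicit Arguments. Unset Strict Implicit. Unset Printing Implicit Defensive.
Import GRing.Theory.
Local Open Scope fset_scope.
Local Open Scope ring_scope.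

Definition mon (r : nat) := {ffun 'I_r -> nat}.

Definition ev (r : nat) (i : 'I_r) : mon r := [ffun l => nat_of_bool (l == i)].
Definition addm (r : nat) (a b : mon r) : mon r := [ffun l => (a l + b l)%N].
(* a - e_i (only used when a_i >= 1) *)
Definition subev (r : nat) (a : mon r) (i : 'I_r) : mon r :=
  [ffun l => (a l - nat_of_bool (l == i))%N].
Definition mdivides (r : nat) (m d : mon r) : bool := [forall l, (m l <= d l)%N].

Definition basis_set (r : nat) (beta : {fset mon r}) : Prop :=
  beta != fset0 /\ forall d m : mon r, d \in beta -> mdivides m d -> m \in beta.

(* an arrow (d, j): tail x^d not in beta, head x^j in beta *)
Definition is_arrow (r : nat) (beta : {fset mon r}) (a : mon r * mon r) : bool :=
  (a.1 \notin beta) && (a.2 \in beta).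

Definition tstep (r : nat) (beta : {fset mon r}) (a b : mon r * mon r) : Prop :=
  is_arrow beta a /\ is_arrow beta b /\
  exists i : 'I_r,
    (b.1 = addm a.1 (ev i) /\ b.2 = addm a.2 (ev i)) \/
    (a.1 = addm b.1 (ev i) /\ a.2 = addm b.2 (ev i)).

Definition tequiv (r : nat) (beta : {fset mon r}) : relation (mon r * mon r) :=
  clos_refl_sym_trans _ (tstep beta).

Definition sim0 (r : nat) (beta : {fset mon r}) (a : mon r * mon r) : Prop :=
  exists b : mon r * mon r, tequiv beta a b /\
    exists i : 'I_r, b.2 i = 0%N /\ (1 <= b.1 i)%N /\ subev b.1 i \notin beta.

Definition Pring (k : fieldType) (r : nat) := {malg k[cmonom (mon r * mon r)%type]}.
Definition var (k : fieldType) (r : nat) (a : (mon r * mon r)%type) : Pring k r :=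
  << ucm a >>.

(* "normal form" coefficient: coefficient of x^j in the reduction of x^m *)
Definition NF (k : fieldType) (r : nat) (beta : {fset mon r}) (m j : mon r)
  : Pring k r :=
  if m \in beta then (m == j)%:R else var k (m, j).

(* Generators of the ideal J of relations defining the coordinate ring of U_beta
   as a quotient R = k[c] / J (Haiman's presentation):
   - the multiplication operators M_i (M_i e_j = sum_q NF(j+e_i, q) e_q)
     commute;
   - x^d = x_i * x^(d - e_i) reduces consistently: c^d = M_i c^(d-e_i)
     for every d not in beta and every i with d_i >= 1;
   - variables indexed by pairs that are not arrows are 0. *)
Definition Jgen (k : fieldType) (r : nat) (beta : {fset mon r}) (p : Pring k r)
  : Prop :=
  (exists (i l : 'I_r) (j q : mon r), j \in beta /\ q \in beta /\
     p = \sum_(m <- beta) NF k beta (addm j (ev i)) m * NF k beta (addm m (ev l)) q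
       - \sum_(m <- beta) NF k beta (addm j (ev l)) m * NF k beta (addm m (ev i)) q)
  \/
  (exists (d : mon r) (i : 'I_r) (q : mon r),
     d \notin beta /\ (1 <= d i)%N /\ q \in beta /\
     p = var k (d, q)
       - \sum_(m <- beta) NF k beta (subev d i) m * NF k beta (addm m (ev i)) q)
  \/
  (exists a : mon r * mon r, ~~ is_arrow beta a /\ p = var k a).

Definition in_ideal (A : comRingType) (S : A -> Prop) (x : A) : Prop :=
  exists (n : nat) (c g : 'I_n -> A),
    (forall i, S (g i)) /\ x = \sum_(i < n) c i * g i.

(* x is 0 mod M^2 in R = k[c]/J, where M = (all c) is the maximal ideal of
   t_beta; i.e. x lies in J + (c)^2 in k[c]. *)
Definition zero_mod_M2 (k : fieldType) (r : nat) (beta : {fset mon r})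
  (x : Pring k r) : Prop :=
  in_ideal (fun p : Pring k r =>
     @Jgen k r beta p \/ exists a b, p = var k a * var k b) x.

(* A function f on pairs (d, j) that vanishes off arrows and on arrows ~ 0
   and is constant along translation steps is a tangent vector at t_beta:
   c_a |-> f(a) eps defines an algebra map from k[c] to the dual numbers
   k[eps] (realised below as the matrices a + b E_01 in 'M_2) that kills
   J + M^2.  Products of two variables die since eps^2 = 0.  The key
   computation is that sum_m c^x_m c^(m + e_l)_q and c^(x + e_l)_q have the
   same image: for x outside beta only the eps-part survives, and it equals
   f(x + e_l, q) since (x, q - e_l) -> (x + e_l, q) is a translation step, or
   since (x + e_l, q) ~ 0 when q_l = 0; so both kinds of generators of J die.
   Conversely, modulo products of variables, c_a - c_b for a translation step
   a -> b and c_a for an arrow a ~ 0 are combinations of reduction relations,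
   hence lie in J + M^2.  Taking for f the indicator of the ~-class of an
   arrow not ~ 0 gives both parts. *)

From HB Require Import structures.
From mathcomp Require Import all_boot all_algebra finmap.
From mathcomp Require Import monalg.
From Stdlib Require Import Relations Classical ClassicalEpsilon.
Import GRing.Theory.
Local Open Scope ring_scope.

Section DualNumbers.
Context {k : fieldType}.

Definition eps : 'M[k]_2 := delta_mx 0 1.
Definition dual (a b : k) : 'M[k]_2 := a%:M + b *: eps.

Lemma eps2 : eps * eps = 0.
Proof. by rewrite /eps -mulmxE mul_delta_mx_cond. Qed.

Lemma dualD a b c d : dual a b + dual c d = dual (a + c) (b + d).
Proof. by rewrite /dual raddfD scalerDl addrACA. Qed.

Lemma dualM a b c d : dual a b * dual c d = dual (a * c) (a * d + b * c).
Proof.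
have sE x : x%:M = x *: (1 : 'M[k]_2) by rewrite scalemx1.
rewrite /dual (sE a) (sE c) (sE (a * c)) mulrDl !mulrDr -!scalerAl -!scalerAr !scalerA eps2.
by rewrite !mulr1 mul1r scaler0 addr0 scalerDl addrA.
Qed.

Lemma dual_sum (I : Type) (s : seq I) (F G : I -> k) :
  \sum_(i <- s) dual (F i) (G i) = dual (\sum_(i <- s) F i) (\sum_(i <- s) G i).
Proof.
elim: s => [|x s IH]; first by rewrite !big_nil /dual scale0r addr0 raddf0.
by rewrite !big_cons IH dualD.
Qed.

Lemma dual0 : dual 0 0 = 0.
Proof. by rewrite /dual scale0r addr0 raddf0. Qed.

Lemma dual_eps_coord a b : dual a b 0 1 = b.
Proof. by rewrite /dual /eps !mxE /= mulr1n mulr1 add0r. Qed.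

End DualNumbers.

Section TangentMonomial.
Context {k : fieldType} {T : choiceType} (f : T -> k).

Definition tangent_mon (m : cmonom T) : 'M[k]_2 :=
  if mdeg m == 0%N then 1
  else if mdeg m == 1%N then (\sum_(a <- finsupp m) f a) *: eps else 0.

Lemma tangent_mon_is_multiplicative : mmorphism tangent_mon.
Proof.
split=> [m1 m2|]; last by rewrite /tangent_mon mdeg1.
rewrite /tangent_mon mdegM.
have [/eqP|nz1] := eqVneq (mdeg m1) 0%N.
  by rewrite mdeg_eq0 => /eqP ->; rewrite mdeg1 mul1m mul1r.
have [/eqP|nz2] := eqVneq (mdeg m2) 0%N.
  by rewrite mdeg_eq0 => /eqP ->; rewrite mdeg1 addn0 mulm1 mulr1 (negbTE nz1).
move: nz1 nz2; case: (mdeg m1) => [|[|d1]] //; case: (mdeg m2) => [|[|d2]] //= _ _.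
all: rewrite ?mul0r ?mulr0 //.
by rewrite -scalerAl -scalerAr eps2 !scaler0.
Qed.

HB.instance Definition _ :=
  monalg.isMultiplicative.Build (cmonom T) 'M[k]_2 tangent_mon
    tangent_mon_is_multiplicative.

End TangentMonomial.

(* Locked because unification would otherwise unfold [mmap] and the
   monomial-algebra structures, which is prohibitively slow. *)
HB.lock Definition tangent {k : fieldType} {T : choiceType} (f : T -> k)
    (p : {malg k[cmonom T]}) : 'M[k]_2 :=
  mmap (@scalar_mx k 2) (tangent_mon f) p.

Section TangentMap.
Context {k : fieldType} {T : choiceType} (f : T -> k).
Local Notation tangent := (tangent f).

Lemma tangent_is_additive : additive tangent.
Proof. by move=> p q; rewrite unlock; apply: mmapB. Qed.

HB.instance Definition _ := GRing.isAdditive.Build _ _ tangent tangent_is_additive.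

Lemma tangent_is_multiplicative : multiplicative tangent.
Proof.
rewrite unlock; apply: commr_mmap_is_multiplicative => p m m'.
by rewrite /GRing.comm -!mulmxE scalar_mxC.
Qed.

HB.instance Definition _ :=
  GRing.isMultiplicative.Build _ _ tangent tangent_is_multiplicative.

Lemma tangentM p q : tangent (p * q) = tangent p * tangent q.
Proof. exact: rmorphM. Qed.

Lemma tangentB p q : tangent (p - q) = tangent p - tangent q.
Proof. exact: rmorphB. Qed.

Lemma tangent_sum (I : Type) (s : seq I) (F : I -> {malg k[cmonom T]}) :
  tangent (\sum_(i <- s) F i) = \sum_(i <- s) tangent (F i).
Proof. exact: rmorph_sum. Qed.

Lemma tangent_nat n : tangent n%:R = dual n%:R 0.
Proof. by rewrite rmorph_nat /dual scale0r addr0 rmorph_nat. Qed.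

Lemma tangent_var a : tangent << ucm a >> = dual 0 (f a).
Proof.
rewrite unlock mmapU /tangent_mon mdegU /= mdomU big_seq_fset1 /dual.
by rewrite raddf0 add0r mul1r.
Qed.

Lemma tangent_var_coord a : tangent << ucm a >> 0 1 = f a.
Proof. by rewrite tangent_var dual_eps_coord. Qed.

Lemma tangent_varM a b : tangent (<< ucm a >> * << ucm b >>) = 0.
Proof.
have := congr2 *%R (tangent_var a) (tangent_var b); rewrite -tangentM => ->.
by rewrite dualM !mul0r mulr0 addr0 dual0.
Qed.

End TangentMap.

Section Monomials.
Context {r : nat}.
Implicit Types (x y q : mon r) (i l : 'I_r).

Lemma addm_evC x i l : addm (addm x (ev i)) (ev l) = addm (addm x (ev l)) (ev i).
Proof. by apply/ffunP => t; rewrite !ffunE addnAC. Qed.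

Lemma addm_evK i : cancel (@addm r ^~ (ev i)) (@subev r ^~ i).
Proof. by move=> x; apply/ffunP => t; rewrite !ffunE addnK. Qed.

Lemma addm_ev_inj i : injective (@addm r ^~ (ev i)).
Proof. exact: can_inj (addm_evK i). Qed.

Lemma subevK y i : (0 < y i)%N -> addm (subev y i) (ev i) = y.
Proof.
move=> yi; apply/ffunP => t; rewrite !ffunE.
by have [->|_] := eqVneq t i; [rewrite subnK | rewrite subn0 addn0].
Qed.

Lemma addm_ev_id x i : addm x (ev i) i = (x i).+1.
Proof. by rewrite !ffunE eqxx addn1. Qed.

Lemma eq_addm_ev x i q : (addm x (ev i) == q) = (0 < q i)%N && (x == subev q i).
Proof.
apply/eqP/andP => [<-|[qi /eqP ->]]; last exact: subevK.
by rewrite addm_ev_id addm_evK.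
Qed.

Lemma tequiv_is_arrow {beta : {fset mon r}} a b :
  tequiv beta a b -> is_arrow beta a = is_arrow beta b.
Proof.
elim=> {a b} [a b [-> [-> _]]| | a b _ -> | a b c _ -> _ ->] //.
Qed.

Section BasisSet.
Context {beta : {fset mon r}}.
Hypothesis beta_basis : basis_set beta.

Lemma basis_subev y i : y \in beta -> subev y i \in beta.
Proof.
move=> yb; apply: (proj2 beta_basis _ _ yb); apply/forallP => t.
by rewrite ffunE leq_subr.
Qed.

Lemma notin_basis_addm x i : x \notin beta -> addm x (ev i) \notin beta.
Proof. by apply: contra => xib; rewrite -(addm_evK i x) basis_subev. Qed.

Lemma sum_basis_eql {V : pzRingType} x (G : mon r -> V) : x \in beta ->
  \sum_(m <- beta) (x == m)%:R * G m = G x.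
Proof.
move=> xb; rewrite (bigD1_seq x) //= ?fset_uniq // eqxx mul1r big1 ?addr0 //.
by move=> m; rewrite eq_sym => /negbTE ->; rewrite mul0r.
Qed.

Lemma sum_basis_addm_eqr {V : pzRingType} l q (G : mon r -> V) : q \in beta ->
  \sum_(m <- beta) G m * (addm m (ev l) == q)%:R =
  if (0 < q l)%N then G (subev q l) else 0.
Proof.
move=> qb; case: ifP => ql; last by rewrite big1 // => m _; rewrite eq_addm_ev ql mulr0.
rewrite (bigD1_seq (subev q l)) //= ?fset_uniq ?basis_subev //.
rewrite eq_addm_ev ql eqxx mulr1 big1 ?addr0 // => m /negbTE.
by rewrite eq_addm_ev ql => ->; rewrite mulr0.
Qed.

End BasisSet.
End Monomials.

Section NormalForm.
Context {k : fieldType} {r : nat} {beta : {fset mon r}}.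

Lemma NF_basis m j : m \in beta -> NF k beta m j = (m == j)%:R.
Proof. by rewrite /NF => ->. Qed.

Lemma NF_notin_basis m j : m \notin beta -> NF k beta m j = var k (m, j).
Proof. by rewrite /NF => /negbTE ->. Qed.

End NormalForm.

Section TangentVector.
Context {k : fieldType} {r : nat} {beta : {fset mon r}}.
Hypothesis beta_basis : basis_set beta.
Context {f : mon r * mon r -> k}.
Hypothesis f_non_arrow : forall a, ~~ is_arrow beta a -> f a = 0.
Hypothesis f_tstep : forall a b, tstep beta a b -> f a = f b.
Hypothesis f_sim0 : forall a, sim0 beta a -> f a = 0.

Local Notation tan := (tangent f).

(* A goal containing two distinct [NF] terms makes unification unfold [NF]
   and the variables behind it, so the proofs below instantiate lemmas with
   [apply]/[etrans] where a [rewrite] would have to compare such terms. *)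

Lemma f_addm_ev x l q : x \notin beta -> q \in beta ->
  (if (0 < q l)%N then f (x, subev q l) else 0) = f (addm x (ev l), q).
Proof.
move=> xb qb; case: ifP => ql.
  apply: f_tstep; split; first by rewrite /is_arrow /= xb basis_subev.
  split; first by rewrite /is_arrow /= qb notin_basis_addm.
  by exists l; left; rewrite subevK.
apply/esym/f_sim0; exists (addm x (ev l), q); split; first exact: rst_refl.
exists l => /=; split; first by apply/eqP; rewrite eqn0Ngt ql.
by rewrite addm_ev_id addm_evK.
Qed.

Lemma tangent_NF m j : j \in beta -> tan (NF k beta m j) = dual (m == j)%:R (f (m, j)).
Proof.
move=> jb; have [mb|mb] := boolP (m \in beta).
  by rewrite NF_basis // tangent_nat f_non_arrow // /is_arrow mb.
rewrite NF_notin_basis // tangent_var.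
by have [mj|//] := eqVneq m j; rewrite mj jb in mb.
Qed.

Lemma tangent_NF_mul x m m' q : x \notin beta -> m \in beta -> q \in beta ->
  tan (NF k beta x m * NF k beta m' q) = dual 0 (f (x, m) * (m' == q)%:R).
Proof.
move=> xb mb qb; have xm : (x == m) = false by apply: contraNF xb => /eqP ->.
have -> : dual 0 (f (x, m) * (m' == q)%:R) =
    dual (x == m)%:R (f (x, m)) * dual (m' == q)%:R (f (m', q)).
  by rewrite xm dualM !mul0r add0r.
by rewrite tangentM; congr (_ * _); apply: tangent_NF.
Qed.

Lemma tangent_reduction x l q : q \in beta ->
  tan (\sum_(m <- beta) NF k beta x m * NF k beta (addm m (ev l)) q) =
  tan (NF k beta (addm x (ev l)) q).
Proof.
move=> qb; have [xb|xb] := boolP (x \in beta).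
  by under eq_bigr do rewrite NF_basis //; rewrite sum_basis_eql.
have xlq : (addm x (ev l) == q) = false.
  by apply: contraNF xb => /eqP xlq; rewrite -(addm_evK l x) xlq basis_subev.
rewrite [RHS]tangent_NF // xlq tangent_sum big_seq.
rewrite (eq_bigr _ (fun m mb => tangent_NF_mul x m (addm m (ev l)) q xb mb qb)).
by rewrite -big_seq dual_sum big1_eq sum_basis_addm_eqr // f_addm_ev.
Qed.

Lemma tangent_Jgen p : Jgen beta p -> tan p = 0.
Proof.
case=> [[i [l [j [q [_ [qb ->]]]]]] | [[d [i [q [db [di [qb ->]]]]]] | [a [na ->]]]].
- rewrite tangentB; apply/eqP; rewrite subr_eq0; apply/eqP.
  apply: etrans (tangent_reduction _ _ _ qb) _; rewrite addm_evC.
  exact/esym/tangent_reduction.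
- rewrite tangentB; apply/eqP; rewrite subr_eq0; apply/eqP/esym.
  by apply: etrans (tangent_reduction _ _ _ qb) _; rewrite subevK // NF_notin_basis.
- by rewrite tangent_var f_non_arrow // dual0.
Qed.

Lemma tangent_zero_mod_M2 p : zero_mod_M2 beta p -> tan p = 0.
Proof.
case=> n [c [g [gen ->]]]; rewrite tangent_sum big1 // => i _.
rewrite tangentM; case: (gen i) => [/tangent_Jgen -> | [a [b ->]]].
  exact: mulr0.
by rewrite tangent_varM mulr0.
Qed.

Lemma zero_mod_M2_var_f_eq0 a : zero_mod_M2 beta (var k a) -> f a = 0.
Proof. by rewrite -(tangent_var_coord f a) => /tangent_zero_mod_M2 ->; rewrite mxE. Qed.

Lemma zero_mod_M2_var_sub_f_eq a b : zero_mod_M2 beta (var k a - var k b) -> f a = f b.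
Proof.
rewrite -(tangent_var_coord f a) -(tangent_var_coord f b) => /tangent_zero_mod_M2.
by rewrite tangentB => /eqP; rewrite subr_eq0 => /eqP /(congr1 (fun A : 'M[k]_2 => A 0 1)).
Qed.

End TangentVector.

Section IdealMembership.
Context {A : comNzRingType} (S : A -> Prop).

Lemma in_ideal0 : in_ideal S 0.
Proof. by exists 0%N, (fun _ => 0), (fun _ => 0); split; [case | rewrite big_ord0]. Qed.

Lemma in_ideal_gen g : S g -> in_ideal S g.
Proof. by exists 1%N, (fun _ => 1), (fun _ => g); rewrite big_ord1 mul1r. Qed.

Lemma in_idealD x y : in_ideal S x -> in_ideal S y -> in_ideal S (x + y).
Proof.
case=> n1 [c1 [g1 [S1 ->]]] [n2 [c2 [g2 [S2 ->]]]].
exists (n1 + n2)%N, (fun i => match split i with inl a => c1 a | inr b => c2 b end),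
  (fun i => match split i with inl a => g1 a | inr b => g2 b end).
split=> [i|]; first by case: (split i).
by rewrite big_split_ord /=; congr (_ + _); apply: eq_bigr => i _;
  rewrite ?(unsplitK (inl i)) ?(unsplitK (inr i)).
Qed.

Lemma in_idealMl a x : in_ideal S x -> in_ideal S (a * x).
Proof.
case=> n [c [g [Sg ->]]]; exists n, (fun i => a * c i), g; split=> //.
by rewrite big_distrr /=; apply: eq_bigr => i _; rewrite mulrA.
Qed.

Lemma in_idealN x : in_ideal S x -> in_ideal S (- x).
Proof. by rewrite -mulN1r; apply: in_idealMl. Qed.

Lemma in_idealB_trans x y z :
  in_ideal S (x - y) -> in_ideal S (y - z) -> in_ideal S (x - z).
Proof. by move=> Sxy Syz; rewrite -(subrK y x) -addrA; apply: in_idealD. Qed.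

Lemma in_idealBK x y : in_ideal S (x - y) -> in_ideal S y -> in_ideal S x.
Proof. by move=> Sxy Sy; rewrite -(subrK y x); apply: in_idealD. Qed.

Lemma in_ideal_sum (I : Type) (s : seq I) (F : I -> A) :
  (forall i, in_ideal S (F i)) -> in_ideal S (\sum_(i <- s) F i).
Proof. by move=> SF; apply: big_ind => //; [apply: in_ideal0 | apply: in_idealD]. Qed.

End IdealMembership.

Section ArrowsModM2.
Context {k : fieldType} {r : nat} {beta : {fset mon r}}.
Hypothesis beta_basis : basis_set beta.

Lemma zero_mod_M2_Jgen (p : Pring k r) : Jgen beta p -> zero_mod_M2 beta p.
Proof. by move=> Jp; apply: in_ideal_gen; left. Qed.

Lemma zero_mod_M2_varM a b : zero_mod_M2 beta (var k a * var k b).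
Proof. by apply: in_ideal_gen; right; exists a, b. Qed.

Lemma zero_mod_M2_tstep x y i : x \notin beta -> addm y (ev i) \in beta ->
  zero_mod_M2 beta (var k (addm x (ev i), addm y (ev i)) - var k (x, y)).
Proof.
move=> xb yib; set q := addm y (ev i).
have yb : y \in beta by rewrite -(addm_evK i y) basis_subev.
have J : zero_mod_M2 beta (var k (addm x (ev i), q) -
    \sum_(m <- beta) NF k beta (subev (addm x (ev i)) i) m * NF k beta (addm m (ev i)) q).
  apply: zero_mod_M2_Jgen; right; left; exists (addm x (ev i)), i, q.
  by rewrite notin_basis_addm // addm_ev_id.
rewrite addm_evK in J; apply: in_idealB_trans J _.
rewrite -(sum_basis_eql y (fun m => var k (x, m)) yb) -sumrB.
apply: in_ideal_sum => m; rewrite NF_notin_basis //.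
have [mib|mib] := boolP (addm m (ev i) \in beta).
  rewrite NF_basis //; have -> : (addm m (ev i) == q) = (y == m).
    by rewrite /q (inj_eq (@addm_ev_inj _ i)) eq_sym.
  by rewrite [X in X - _]mulrC subrr; apply: in_ideal0.
rewrite NF_notin_basis // (_ : (y == m) = false) ?mul0r ?subr0.
  exact: zero_mod_M2_varM.
by apply: contraNF mib => /eqP <-.
Qed.

Lemma zero_mod_M2_tequiv a b : tequiv beta a b -> zero_mod_M2 beta (var k a - var k b).
Proof.
elim=> {a b} [[x y] [x' y'] [/andP[/= xb yb] [/andP[/= x'b y'b] [i [[ex ey]|[ex ey]]]]]
             | a | a b _ /in_idealN | a b c _ ab _ bc] /=.
- by subst; rewrite -opprB; apply/in_idealN/zero_mod_M2_tstep.
- by subst; apply: zero_mod_M2_tstep.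
- by rewrite subrr; apply: in_ideal0.
- by rewrite opprB.
- exact: in_idealB_trans ab bc.
Qed.

Lemma zero_mod_M2_sim0 a : sim0 beta a -> zero_mod_M2 beta (var k a).
Proof.
case=> [[x y] [ab [i [/= yi [xi xib]]]]].
apply: in_idealBK (zero_mod_M2_tequiv _ _ ab) _.
have [yb|yb] := boolP (y \in beta); last first.
  apply: zero_mod_M2_Jgen; right; right; exists (x, y).
  by rewrite /is_arrow (negbTE yb) andbF.
have J : zero_mod_M2 beta (var k (x, y) -
    \sum_(m <- beta) NF k beta (subev x i) m * NF k beta (addm m (ev i)) y).
  apply: zero_mod_M2_Jgen; right; left; exists x, i, y.
  by split=> //; apply: contra xib; apply: basis_subev.
apply: in_idealBK J _.
apply: in_ideal_sum => m; rewrite NF_notin_basis //.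
have [mib|mib] := boolP (addm m (ev i) \in beta); last first.
  by rewrite NF_notin_basis //; apply: zero_mod_M2_varM.
rewrite NF_basis //; have -> : (addm m (ev i) == y) = false.
  by apply/negbTE/eqP => my; move: yi; rewrite -my addm_ev_id.
exact/in_idealMl/in_ideal0.
Qed.

End ArrowsModM2.

Section ClassIndicator.
Context {k : fieldType} {r : nat} {beta : {fset mon r}} {a0 : mon r * mon r}.

Definition class_indicator (b : mon r * mon r) : k :=
  if excluded_middle_informative (tequiv beta a0 b) then 1 else 0.

Lemma class_indicatorP b :
  (tequiv beta a0 b /\ class_indicator b = 1) \/
  (~ tequiv beta a0 b /\ class_indicator b = 0).
Proof. by rewrite /class_indicator; case: excluded_middle_informative; [left | right]. Qed.

Lemma class_indicator_id : class_indicator a0 = 1.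
Proof.
case: (class_indicatorP a0) => [[_ //] | [na0 _]].
by case: na0; apply: rst_refl.
Qed.

Lemma class_indicator_eq1 b : class_indicator b = 1 -> tequiv beta a0 b.
Proof.
case: (class_indicatorP b) => [[ab _] // | [_ ->] /esym/eqP].
by rewrite oner_eq0.
Qed.

Lemma class_indicator_tstep b c : tstep beta b c -> class_indicator b = class_indicator c.
Proof.
move=> bc; have bc' := rst_step _ _ _ _ bc.
case: (class_indicatorP b) (class_indicatorP c)
  => [[ab ->] | [ab ->]] [[ac ->] | [ac ->]] //.
- by case: ac; apply: rst_trans ab bc'.
- by case: ab; apply: rst_trans ac (rst_sym _ _ _ _ bc').
Qed.

Hypothesis a0_arrow : is_arrow beta a0.

Lemma class_indicator_non_arrow b : ~~ is_arrow beta b -> class_indicator b = 0.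
Proof.
case: (class_indicatorP b) => [[/tequiv_is_arrow <-] | []] //.
by rewrite a0_arrow.
Qed.

Hypothesis a0_nsim0 : ~ sim0 beta a0.

Lemma class_indicator_sim0 b : sim0 beta b -> class_indicator b = 0.
Proof.
move=> [c [bc c0]]; case: (class_indicatorP b) => [[ab _] | [_ ->]] //.
by case: a0_nsim0; exists c; split=> //; apply: rst_trans ab bc.
Qed.

End ClassIndicator.

Theorem corollary3p5 (k : closedFieldType) (r : nat) (beta : {fset mon r}) :
  basis_set beta ->
  (forall a : mon r * mon r, is_arrow beta a ->
     zero_mod_M2 beta (var k a) -> sim0 beta a) /\
  (forall a1 a2 : mon r * mon r, is_arrow beta a1 -> is_arrow beta a2 ->
     zero_mod_M2 beta (var k a1 - var k a2) ->
     ~ zero_mod_M2 beta (var k a1) ->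
     tequiv beta a1 a2).
Proof.
move=> beta_basis; split=> [a a_arrow a_M2 | a1 a2 a1_arrow _ a12_M2 a1_nM2].
  apply: NNPP => a_nsim0.
  have := zero_mod_M2_var_f_eq0 beta_basis (class_indicator_non_arrow a_arrow)
    class_indicator_tstep (class_indicator_sim0 a_nsim0) _ a_M2.
  by rewrite class_indicator_id; apply/eqP; rewrite oner_eq0.
have a1_nsim0 : ~ sim0 beta a1 by move/(zero_mod_M2_sim0 beta_basis).
have := zero_mod_M2_var_sub_f_eq beta_basis (class_indicator_non_arrow a1_arrow)
  class_indicator_tstep (class_indicator_sim0 a1_nsim0) _ _ a12_M2.
by rewrite class_indicator_id => /esym /class_indicator_eq1.
Qed.
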